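(* Let $n\ge1$, $\mathbf x\in[0,1]^n$, $n_1=|\{i:x_i\in[0,\tfrac12]\}|$, $n_2=|\{i:x_i\in(\tfrac12,1]\}|$, and let the Majority Vote mechanism output $y=0$ if $n_1\le n_2$ and $y=1$ otherwise. Then for every $1\le p<\infty$, $$\Big(\sum_i(1-|x_i-y|)^p\Big)^{1/p}\le(2^p+1)^{1/p}\min_{z\in[0,1]}\Big(\sum_i(1-|x_i-z|)^p\Big)^{1/p},$$ and $\max_i(1-|x_i-y|)\le 2\min_{z\in[0,1]}\max_i(1-|x_i-z|)$. That is, Majority Vote is a $(2^p+1)^{1/p}$-approximation for the $L_p$ social cost for $1\le p<\infty$ and a $2$-approximation for the $L_\infty$ social cost (maximum cost).
   Context: Obnoxious facility location on $[0,1]$: agent $i$ at $x_i$ incurs cost $c(x_i,y)=1-|x_i-y|$ from a facility at $y$. $L_p$ social cost: $\mathrm{sc}_p(y,\mathbf x)=(\sum_ic(x_i,y)^p)^{1/p}$, and $\mathrm{sc}_\infty(y,\mathbf x)=\max_ic(x_i,y)$; to be minimized. *)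

(* R : realType, real exponent via powR (`^),
   which satisfies 0 `^ p = 0 for p <> 0. *)
From HB Require Import structures.
From mathcomp Require Import all_boot all_order all_algebra.
From mathcomp Require Import all_classical all_reals.
From mathcomp Require Import exp.
Set Implicit Arguments. Unset Strict Implicit. Unset Printing Implicit Defensive.
Import Order.TTheory GRing.Theory Num.Theory.
Local Open Scope ring_scope.

(* cost of agent at a from obnoxious facility at y *)
Definition cost {R : realType} (a y : R) : R := 1 - `|a - y|.

Definition scp {R : realType} {n : nat} (p : R) (x : 'I_n -> R) (y : R) : R :=
  (\sum_(i < n) (cost (x i) y) `^ p) `^ (p^-1).

(* L_oo social cost: maximum cost (costs are >= 0 on [0,1], n >= 1) *)
Definition scinf {R : realType} {n : nat} (x : 'I_n -> R) (y : R) : R :=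
  \big[Num.max/0]_(i < n) cost (x i) y.

Definition n_left {R : realType} {n : nat} (x : 'I_n -> R) : nat :=
  #|[set i : 'I_n | (0 <= x i) && (x i <= 2^-1)]|.
Definition n_right {R : realType} {n : nat} (x : 'I_n -> R) : nat :=
  #|[set i : 'I_n | (2^-1 < x i) && (x i <= 1)]|.

Definition majority_vote {R : realType} {n : nat} (x : 'I_n -> R) : R :=
  if (n_left x <= n_right x)%N then 0 else 1.

From HB Require Import structures.
From mathcomp Require Import all_boot all_order all_algebra.
From mathcomp Require Import all_classical all_reals.
From mathcomp Require Import exp.
From mathcomp Require Import lra.
Import Order.TTheory GRing.Theory Num.Theory.
Local Open Scope ring_scope.

(* Let y be the vote and z any location in [0,1].  An agent in the half of
   [0,1] opposite to the endpoint y has y as its farthest point, so it is no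
   worse off at y than at z; only the agents N in y's half can lose, each by
   a cost of at most 1.  The vote puts y in the (weak) minority half, so #|N|
   is at most the number of agents in z's half, each of whom has cost at
   least 1/2 at z.  Hence the p-th powers of the costs at y on N add up to at
   most #|N| <= 2^p sum_i cost(x_i, z)^p, which gives the factor 2^p + 1; for
   the maximum cost, N nonempty forces an agent of cost at least 1/2 at z. *)

Section CostComparison.
Context {R : realType} {n : nat}.
Variables (c d : 'I_n -> R) (N K : {set 'I_n}).
Hypotheses (c_ge0 : forall i, 0 <= c i) (c_le1 : forall i, c i <= 1).
Hypothesis d_ge0 : forall i, 0 <= d i.
Hypothesis c_le_d : forall i, i \notin N -> c i <= d i.
Hypothesis d_ge_half : forall i, i \in K -> 2^-1 <= d i.
Hypothesis card_NK : (#|N| <= #|K|)%N.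

Lemma sum_powR_le_card_add (p : R) : 0 <= p ->
  \sum_(i < n) c i `^ p <= #|N|%:R + \sum_(i < n) d i `^ p.
Proof.
move=> p_ge0.
have -> : #|N|%:R = \sum_(i < n) (if i \in N then 1 else 0) :> R.
  by rewrite -big_mkcond sumr_const.
rewrite -big_split /=; apply: ler_sum => i _.
case: ifP => [_ | /negbT iN]; last first.
  by rewrite add0r ge0_ler_powR ?nnegrE ?c_le_d.
have : c i `^ p <= 1 `^ p by rewrite ge0_ler_powR // nnegrE.
by rewrite powR1; have := powR_ge0 (d i) p; lra.
Qed.

Lemma card_le_sum_powR (p : R) : 0 <= p -> #|K|%:R <= 2 `^ p * \sum_(i < n) d i `^ p.
Proof.
move=> p_ge0.
have -> : #|K|%:R = \sum_(i < n) (if i \in K then 1 else 0) :> R.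
  by rewrite -big_mkcond sumr_const.
rewrite mulr_sumr; apply: ler_sum => i _.
case: ifP => [iK | _]; last by rewrite mulr_ge0 ?powR_ge0.
have : 1 `^ p <= (2 * d i) `^ p.
  by rewrite ge0_ler_powR ?nnegrE ?mulr_ge0 //; have := d_ge_half _ iK; lra.
by rewrite powR1 powRM.
Qed.

Lemma sum_powR_le (p : R) : 0 <= p ->
  \sum_(i < n) c i `^ p <= (2 `^ p + 1) * \sum_(i < n) d i `^ p.
Proof.
move=> p_ge0; apply: (le_trans (sum_powR_le_card_add p p_ge0)).
have NK : #|N|%:R <= #|K|%:R :> R by rewrite ler_nat.
by have := card_le_sum_powR p p_ge0; lra.
Qed.

Lemma Lp_norm_le (p : R) : 0 <= p ->
  (\sum_(i < n) c i `^ p) `^ p^-1 <=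
  (2 `^ p + 1) `^ p^-1 * (\sum_(i < n) d i `^ p) `^ p^-1.
Proof.
move=> p_ge0.
have sum_ge0 (f : 'I_n -> R) : 0 <= \sum_(i < n) f i `^ p.
  by apply: sumr_ge0 => i _; apply: powR_ge0.
have factor_ge0 : 0 <= 2 `^ p + 1 by rewrite addr_ge0 ?powR_ge0.
rewrite -powRM // ge0_ler_powR ?invr_ge0 ?nnegrE ?mulr_ge0 //.
exact: sum_powR_le.
Qed.

Lemma bigmax_le_double :
  \big[Num.max/0]_(i < n) c i <= 2 * \big[Num.max/0]_(i < n) d i.
Proof.
have max_d_ge0 : 0 <= \big[Num.max/0]_(i < n) d i by apply: bigmax_ge_id.
apply: bigmax_le => [|i _]; first lra.
have max_d_ge j : d j <= \big[Num.max/0]_(i < n) d i by apply: le_bigmax.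
case: (boolP (i \in N)) => iN; last by have := c_le_d _ iN; have := max_d_ge i; lra.
have /card_gt0P[k kK] : (0 < #|K|)%N by apply: leq_trans card_NK; apply/card_gt0P; exists i.
by have := d_ge_half _ kK; have := max_d_ge k; have := c_le1 i; lra.
Qed.

End CostComparison.

Section Geometry.
Context {R : realType}.
Implicit Types a y z : R.

Lemma cost_ge0 a z : 0 <= a <= 1 -> 0 <= z <= 1 -> 0 <= cost a z.
Proof.
move=> /andP[? ?] /andP[? ?]; rewrite /cost subr_ge0 ler_norml; apply/andP; lra.
Qed.

Lemma cost_le1 a z : cost a z <= 1.
Proof. by rewrite /cost lerBlDr lerDl. Qed.

Lemma half_le_cost a z : 0 <= a <= 1 -> 0 <= z <= 1 ->
  (a <= 2^-1) = (z <= 2^-1) -> 2^-1 <= cost a z.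
Proof.
move=> /andP[? ?] /andP[? ?]; rewrite /cost lerBrDl -lerBrDr ler_norml.
by case: (lerP a 2^-1); case: (lerP z 2^-1) => // ? ? _; apply/andP; split; lra.
Qed.

Lemma cost_far_endpoint_le a y z : (y == 0) || (y == 1) ->
  0 <= a <= 1 -> 0 <= z <= 1 ->
  (a <= 2^-1) != (y <= 2^-1) -> cost a y <= cost a z.
Proof.
move=> /orP[] /eqP-> /andP[? ?] /andP[? ?]; rewrite /cost lerD2l lerN2.
- rewrite subr0 (@ger0_norm _ a) // ler_norml.
  case: (lerP a 2^-1) => [_ | ? _]; first by rewrite invr_ge0 ler0n.
  by apply/andP; split; lra.
- rewrite (distrC a 1) (@ger0_norm _ (1 - a)) ?subr_ge0 // ler_norml.
  case: (lerP a 2^-1) => [? _ | _]; first by apply/andP; split; lra.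
  by rewrite invf_ge1 ?ltr0n // lern1.
Qed.

End Geometry.

Definition agents_in_half_of {R : realType} {n : nat} (x : 'I_n -> R) (z : R)
  : {set 'I_n} :=
  if z <= 2^-1 then [set i | (0 <= x i) && (x i <= 2^-1)]
  else [set i | (2^-1 < x i) && (x i <= 1)].

Section MajorityVote.
Context {R : realType} {n : nat} {x : 'I_n -> R}.
Hypothesis x01 : forall i, 0 <= x i <= 1.

Lemma mem_agents_in_half_of z i :
  (i \in agents_in_half_of x z) = ((x i <= 2^-1) == (z <= 2^-1)).
Proof.
have /andP[xi_ge0 xi_le1] := x01 i.
rewrite /agents_in_half_of; case: ifP => _; rewrite inE ?xi_ge0 ?xi_le1 ?andbT.
  by rewrite eqb_id.
by rewrite ltNge eqbF_neg.
Qed.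

Lemma majority_vote_endpoint : (majority_vote x == 0) || (majority_vote x == 1).
Proof. by rewrite /majority_vote; case: ifP; rewrite eqxx ?orbT. Qed.

Lemma majority_vote_bounds : 0 <= majority_vote x <= 1.
Proof. by case/orP: majority_vote_endpoint => /eqP->; rewrite lexx ler01. Qed.

Lemma card_agents_in_half_of_vote z :
  (#|agents_in_half_of x (majority_vote x)| <= #|agents_in_half_of x z|)%N.
Proof.
have half_ge0 : 0 <= 2^-1 :> R by rewrite invr_ge0 ler0n.
have one_le_half : (1 <= 2^-1 :> R) = false by rewrite invf_ge1 ?ltr0n // lern1.
rewrite /agents_in_half_of /majority_vote.
have [vote | vote] := leqP (n_left x) (n_right x);
  rewrite ?half_ge0 ?one_le_half; case: ifP => _ //; exact: ltnW.
Qed.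

Lemma cost_vote_le_outside z i : 0 <= z <= 1 ->
  i \notin agents_in_half_of x (majority_vote x) ->
  cost (x i) (majority_vote x) <= cost (x i) z.
Proof.
move=> z01; rewrite mem_agents_in_half_of => far.
exact: cost_far_endpoint_le majority_vote_endpoint (x01 i) z01 far.
Qed.

Lemma half_le_cost_inside z i : 0 <= z <= 1 ->
  i \in agents_in_half_of x z -> 2^-1 <= cost (x i) z.
Proof.
by move=> z01; rewrite mem_agents_in_half_of => /eqP; apply: half_le_cost.
Qed.

End MajorityVote.

Theorem theorem10 (R : realType) (n : nat) (x : 'I_n -> R) :
  (0 < n)%N ->
  (forall i, 0 <= x i <= 1) ->
  (forall p : R, 1 <= p ->
     forall z : R, 0 <= z <= 1 ->
       scp p x (majority_vote x) <= (2 `^ p + 1) `^ (p^-1) * scp p x z)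
  /\
  (forall z : R, 0 <= z <= 1 ->
       scinf x (majority_vote x) <= 2 * scinf x z).
Proof.
move=> _ x01; set y := majority_vote x.
have y01 : 0 <= y <= 1 := majority_vote_bounds.
split=> [p p_ge1 z z01 | z z01].
- apply: (Lp_norm_le (fun i => cost (x i) y) (fun i => cost (x i) z)
            (agents_in_half_of x y) (agents_in_half_of x z)) => [i|i|i|i|i||].
  + exact: cost_ge0 (x01 i) y01.
  + exact: cost_le1.
  + exact: cost_ge0 (x01 i) z01.
  + exact: cost_vote_le_outside x01 z i z01.
  + exact: half_le_cost_inside x01 z i z01.
  + exact: card_agents_in_half_of_vote.
  + exact: le_trans ler01 p_ge1.
- apply: (bigmax_le_double (fun i => cost (x i) y) (fun i => cost (x i) z)
            (agents_in_half_of x y) (agents_in_half_of x z)) => [i|i|i|].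
  + exact: cost_le1.
  + exact: cost_vote_le_outside x01 z i z01.
  + exact: half_le_cost_inside x01 z i z01.
  + exact: card_agents_in_half_of_vote.
Qed.
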